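(* Let $\{\alpha_k^{c}\}$ and $\{\tilde\alpha_k^{c}\}$ be the sequences of actual and tentative continuous stepsizes yielded by Algorithm DFNDFL (described in the context) along the directions $s_k\in D^c(x_k)$. Then \[ \lim_{k\to\infty}\max \{\alpha_k^{c}, \tilde \alpha_k^{c}\} = 0. \]
   Context: Consider the problem $\min f(x)$ s.t. $x\in X\cap\mathcal{Z}$, where $X=\{x\in\mathbb{R}^n: l\le x\le u\}$ is compact (with $l_i<u_i$, and $l_i,u_i\in\mathbb{Z}$ for $i\in I^z$), $\mathcal{Z}=\{x\in\mathbb{R}^n: x_i\in\mathbb{Z},\ i\in I^z\}$, $I^c\cup I^z=\{1,\dots,n\}$, $I^c\cap I^z=\emptyset$, and $f$ is continuous and Lipschitz continuous with respect to the continuous variables $x_i$, $i\in I^c$. $[x]_{[l,u]}=\max\{l,\min\{u,x\}\}$ denotes projection onto $X$. $D^c(x)$ is the cone of vectors $s$ with $s_i=0$ for $i\in I^z$, $s_i\ge0$ if $i\in I^c$ and $x_i=l_i$, $s_i\le 0$ if $i\in I^c$ and $x_i=u_i$. Projected Continuous Search$(\tilde\alpha,w,p;\alpha,\tilde p)$ with data $\gamma>0$, $\delta\in(0,1)$: set $\alpha=\tilde\alpha$; if $f([w+\alpha p]_{[l,u]})\le f(w)-\gamma\alpha^2$ set $\tilde p=p$, else if $f([w-\alpha p]_{[l,u]})\le f(w)-\gamma\alpha^2$ set $\tilde p=-p$, else return $\alpha=0$, $\tilde p=p$; in the successful case repeatedly set $\beta=\alpha/\delta$ and, while $f([w+\beta\tilde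 p]_{[l,u]})\le f(w)-\gamma\beta^2$, set $\alpha=\beta$; return $\alpha,\tilde p$. Algorithm DFNDFL: start from $x_0\in X\cap\mathcal{Z}$, $\xi_0>0$, $\theta\in(0,1)$, a sequence $\{s_k\}$ with $s_k\in D^c(x_0)$, $\|s_k\|=1$, and $\tilde\alpha_0^c=1$. At iteration $k$, Phase 1 computes $\alpha_k^c,\tilde s_k$ by the Projected Continuous Search$(\tilde\alpha_k^c,x_k,s_k)$; if $\alpha_k^c=0$ then $\tilde\alpha_{k+1}^c=\theta\tilde\alpha_k^c$ and $\tilde x_k=x_k$, otherwise $\tilde\alpha_{k+1}^c=\alpha_k^c$ and $\tilde x_k=[x_k+\alpha_k^c\tilde s_k]_{[l,u]}$. Phase 2 then explores feasible primitive integer directions (directions with zero continuous part and integer part having greatest common divisor 1) by a Discrete Search requiring sufficient decrease $f(w+\alpha p)\le f(w)-\xi_k$, producing a point $y^+\in X\cap\mathcal{Z}$ with $f(y^+)\le f(\tilde x_k)$, and updates $\xi_k$ (nonincreasingly). Phase 3 chooses any $x_{k+1}\in X\cap\mathcal{Z}$ with $f(x_{k+1})\le f(y^+)$. Hence $f(x_{k+1})\le f(\tilde x_k)\le f(x_k)$ for all $k$. *)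

From HB Require Import structures.
From mathcomp Require Import all_boot all_order all_algebra.
From mathcomp Require Import all_classical all_reals all_analysis.
Set Implicit Arguments. Unset Strict Implicit. Unset Printing Implicit Defensive.
Import Order.TTheory GRing.Theory Num.Theory.
Import numFieldNormedType.Exports.
Local Open Scope classical_set_scope.
Local Open Scope ring_scope.

Section DFNDFL.
Variables (R : realType) (n : nat).
Implicit Types (x y p w s : 'rV[R]_n).

Definition inX (l u : 'rV[R]_n) x : Prop := forall i, l 0 i <= x 0 i <= u 0 i.

Definition inZ (Iz : {set 'I_n}) x : Prop := forall i, i \in Iz -> x 0 i \is a Num.int.

Definition feasibleXZ (l u : 'rV[R]_n) (Iz : {set 'I_n}) x : Prop := inX l u x /\ inZ Iz x.

Definition box_proj (l u : 'rV[R]_n) x : 'rV[R]_n :=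
  \row_i Num.max (l 0 i) (Num.min (u 0 i) (x 0 i)).

Definition Dc (l u : 'rV[R]_n) (Iz : {set 'I_n}) x s : Prop :=
  forall i,
    (i \in Iz -> s 0 i = 0) /\
    (i \notin Iz -> x 0 i = l 0 i -> 0 <= s 0 i) /\
    (i \notin Iz -> x 0 i = u 0 i -> s 0 i <= 0).

Definition unit_norm2 s : Prop := \sum_i (s 0 i) ^+ 2 = 1.

(* Input/output specification of Projected Continuous Search(atil, w, p; alpha, ptil)
   with data gamma, delta: either both tentative tests fail and (alpha, ptil) = (0, p),
   or a sign ptil in {p, -p} is selected (p first) and the expansion loop,
   which tries beta = atil / delta^i for i = 1, 2, ..., stops at the first failure,
   returning alpha = atil / delta^j. *)
Definition pcs_suff_dec (f : 'rV[R]_n -> R) (gamma : R) (l u : 'rV[R]_n) w d a : bool :=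
  f (box_proj l u (w + a *: d)) <= f w - gamma * a ^+ 2.

Definition PCS (f : 'rV[R]_n -> R) (gamma delta : R) (l u : 'rV[R]_n)
  (atil : R) w p (alpha : R) (ptil : 'rV[R]_n) : Prop :=
  (~~ pcs_suff_dec f gamma l u w p atil /\ ~~ pcs_suff_dec f gamma l u w (- p) atil /\
     alpha = 0 /\ ptil = p)
  \/
  ((ptil = p /\ pcs_suff_dec f gamma l u w p atil \/
    ptil = - p /\ ~~ pcs_suff_dec f gamma l u w p atil /\ pcs_suff_dec f gamma l u w (- p) atil) /\
   exists j : nat,
     (forall i : nat, (i <= j)%N -> pcs_suff_dec f gamma l u w ptil (atil / delta ^+ i)) /\
     ~~ pcs_suff_dec f gamma l u w ptil (atil / delta ^+ j.+1) /\
     alpha = atil / delta ^+ j).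

End DFNDFL.

(* Every successful continuous step buys a decrease gamma * alpha_k^2 of f, and f is bounded
   below on the compact box X, so the series of the alpha_k^2 converges and alpha_k -> 0.
   The tentative step is either reset to the last actual step or contracted by theta, so
   once the actual steps are below e the tentative ones fall below e geometrically fast. *)
From HB Require Import structures.
From mathcomp Require Import all_boot all_order all_algebra.
From mathcomp Require Import all_classical all_reals all_analysis.
From mathcomp Require Import lra.
Import Order.TTheory GRing.Theory Num.Theory.
Import numFieldNormedType.Exports.
Local Open Scope classical_set_scope.
Local Open Scope ring_scope.

Section real_sequences.
Context {R : realType}.
Implicit Types (a b d v : R ^nat) (c m theta : R).

Lemma lbounded_decrease_cvg0 {v d m} :
  (forall k, m <= v k) -> (forall k, 0 <= d k) -> (forall k, v k.+1 <= v k - d k) ->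
  d @ \oo --> 0.
Proof.
move=> v_ge_m d_ge0 v_dec; apply: cvg_series_cvg_0.
have series_le k : series d k <= v 0%N - v k.
  elim: k => [|k IH]; first by rewrite /series /= big_geq // subrr.
  by rewrite seriesSr; have := v_dec k; lra.
apply: nondecreasing_is_cvgn; first exact: nondecreasing_series.
exists (v 0%N - m) => _ [k _ <-]; have := series_le k; have := v_ge_m k; lra.
Qed.

Lemma lbounded_sqr_decrease_cvg0 {v a c m} :
  0 < c -> (forall k, m <= v k) -> (forall k, 0 <= a k) ->
  (forall k, v k.+1 <= v k - c * a k ^+ 2) -> a @ \oo --> 0.
Proof.
move=> c_gt0 v_ge_m a_ge0 v_dec.
have ca2_ge0 k : 0 <= c * a k ^+ 2 by rewrite mulr_ge0 ?sqr_ge0 ?ltW.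
have ca2_cvg0 := lbounded_decrease_cvg0 v_ge_m ca2_ge0 v_dec.
apply/cvgr0Pnorm_le => e e_gt0.
have ce2_gt0 : 0 < c * e ^+ 2 by rewrite mulr_gt0 ?exprn_gt0.
near=> k.
have : `|c * a k ^+ 2| <= c * e ^+ 2 by near: k; exact: cvgr0_norm_le _ ca2_cvg0 _ ce2_gt0.
by rewrite !ger0_norm // ler_pM2l // ler_sqr ?nnegrE // ltW.
Unshelve. all: by end_near. Qed.

Lemma contract_or_reset_cvg0 {a b theta} :
  0 <= theta < 1 -> a @ \oo --> 0 -> (forall k, 0 <= b k) ->
  (forall k, b k.+1 <= Num.max (theta * b k) (a k)) -> b @ \oo --> 0.
Proof.
move=> /andP[theta_ge0 theta_lt1] a_cvg0 b_ge0 b_step.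
apply/cvgr0Pnorm_le => e e_gt0.
have [K _ a_le_e] := cvgr0_norm_le _ a_cvg0 _ e_gt0.
have b_tail j : b (K + j)%N <= Num.max (theta ^+ j * b K) e.
  elim: j => [|j IH]; first by rewrite addn0 expr0 mul1r le_max lexx.
  rewrite addnS (le_trans (b_step _)) // ge_max; apply/andP; split; last first.
    by rewrite le_max (le_trans (ler_norm _) (a_le_e _ (leq_addr _ _))) orbT.
  move: IH; rewrite !le_max exprSr -mulrA mulrCA => /orP[IH|IH]; apply/orP; [left|right].
    exact: ler_wpM2l.
  by rewrite (le_trans (ler_wpM2l theta_ge0 IH)) // ger_pMl // ltW.
have geom_cvg0 : (fun j => theta ^+ j * b K) @ \oo --> 0.
  rewrite -(mul0r (b K)); apply: cvgM; last exact: cvg_cst.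
  by apply: cvg_expr; rewrite ger0_norm.
have [M _ geom_le_e] := cvgr0_norm_le _ geom_cvg0 _ e_gt0.
exists (K + M)%N => // k /= KMk; rewrite ger0_norm //.
have Kk : (K <= k)%N := leq_trans (leq_addr _ _) KMk.
have := b_tail (k - K)%N; rewrite subnKC // => /le_trans; apply.
rewrite ge_max lexx andbT (le_trans (ler_norm _)) // geom_le_e //=.
by rewrite leq_subRL.
Qed.

Lemma cvg0_max a b :
  a @ \oo --> 0 -> b @ \oo --> 0 -> (fun k => Num.max (a k) (b k)) @ \oo --> 0.
Proof.
move=> a_cvg0 b_cvg0; apply/cvgr0Pnorm_le => e e_gt0.
near=> k.
have a_le_e : `|a k| <= e by near: k; exact: cvgr0_norm_le _ a_cvg0 _ e_gt0.
have b_le_e : `|b k| <= e by near: k; exact: cvgr0_norm_le _ b_cvg0 _ e_gt0.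
by case: (leP (a k) (b k)).
Unshelve. all: by end_near. Qed.

End real_sequences.

Section box.
Context {R : realType} {n : nat} {l u : 'rV[R]_n}.

Lemma box_compact : compact [set y | inX l u y].
Proof.
have -> : [set y | inX l u y] =
    [set y : 'rV[R]_n | forall i, `[l 0 i, u 0 i]%classic (y 0 i)].
  by rewrite predeqE => y; split => /= + i => /(_ i); rewrite /= in_itv.
exact: (@rV_compact R^o n (fun i => `[l 0 i, u 0 i]%classic)
  (fun i => @segment_compact R _ _)).
Qed.

Lemma continuous_box_lbounded {f : 'rV[R]_n -> R} {y0} :
  inX l u y0 -> {within [set y | inX l u y], continuous f} ->
  exists m, forall y, inX l u y -> m <= f y.
Proof.
move=> Xy0 f_cont.
have [c _ f_ge_fc] := compact_EVT_min (ex_intro _ y0 Xy0) box_compact f_cont.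
by exists (f c) => y Xy; apply: f_ge_fc; rewrite inE.
Qed.

End box.

Section projected_continuous_search.
Context {R : realType} {n : nat} {f : 'rV[R]_n -> R} {gamma delta : R} {l u : 'rV[R]_n}.
Context {atil alpha : R} {w p ptil : 'rV[R]_n}.
Hypothesis search : PCS f gamma delta l u atil w p alpha ptil.

Lemma PCS_step_ge0 : 0 < delta -> 0 <= atil -> 0 <= alpha.
Proof.
move=> delta_gt0 atil_ge0.
case: search => [[_ [_ [-> _]]] | [_ [j [_ [_ ->]]]]] //.
by rewrite divr_ge0 // exprn_ge0 // ltW.
Qed.

Lemma PCS_suff_dec : alpha != 0 -> pcs_suff_dec f gamma l u w ptil alpha.
Proof.
case: search => [[_ [_ [-> _]]] | [_ [j [suff_dec [_ ->]]]]]; first by rewrite eqxx.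
by move=> _; exact: suff_dec.
Qed.

End projected_continuous_search.

Theorem mainTheorem7 (R : realType) (n : nat) (Iz : {set 'I_n})
  (l u : 'rV[R]_n) (f : 'rV[R]_n -> R)
  (gamma delta theta : R)
  (x xt s ptil : nat -> 'rV[R]_n) (alpha atil : nat -> R) :
  (* the box X: l_i < u_i, integer bounds on integer variables *)
  (forall i, l 0 i < u 0 i) ->
  (forall i, i \in Iz -> l 0 i \is a Num.int /\ u 0 i \is a Num.int) ->
  (* f continuous on X and Lipschitz w.r.t. the continuous variables *)
  {within [set y | inX l u y], continuous f} ->
  (exists L : R, forall y z, inX l u y -> inX l u z ->
      (forall i, i \in Iz -> y 0 i = z 0 i) -> `|f y - f z| <= L * `|y - z|) ->
  (* parameters *)
  0 < gamma -> 0 < delta < 1 -> 0 < theta < 1 ->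
  (* initialization *)
  feasibleXZ l u Iz (x 0%N) -> atil 0%N = 1 ->
  (* directions *)
  (forall k, Dc l u Iz (x k) (s k) /\ unit_norm2 (s k)) ->
  (* Phase 1 *)
  (forall k, PCS f gamma delta l u (atil k) (x k) (s k) (alpha k) (ptil k)) ->
  (forall k, alpha k = 0 -> atil k.+1 = theta * atil k /\ xt k = x k) ->
  (forall k, alpha k != 0 ->
     atil k.+1 = alpha k /\ xt k = box_proj l u (x k + alpha k *: ptil k)) ->
  (* Phases 2 and 3 *)
  (forall k, feasibleXZ l u Iz (x k.+1) /\ f (x k.+1) <= f (xt k)) ->
  (fun k => Num.max (alpha k) (atil k)) @ \oo --> (0 : R).
Proof.
move=> _ _ f_cont _ gamma_gt0 /andP[delta_gt0 _] /andP[theta_gt0 theta_lt1] [X0 _] atil0 _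
  search fail success next.
have Xx k : inX l u (x k) by case: k => [|k] //; have [[]] := next k.
have [m f_ge_m] := continuous_box_lbounded X0 f_cont.
have atil_ge0 k : 0 <= atil k.
  elim: k => [|k IH]; first by rewrite atil0.
  have [/fail[-> _]|/success[-> _]] := eqVneq (alpha k) 0; first by rewrite mulr_ge0 // ltW.
  exact: PCS_step_ge0 (search k) delta_gt0 IH.
have alpha_ge0 k : 0 <= alpha k := PCS_step_ge0 (search k) delta_gt0 (atil_ge0 k).
have f_dec k : f (x k.+1) <= f (x k) - gamma * alpha k ^+ 2.
  have [_ f_next] := next k.
  have [alpha0|alpha_neq0] := eqVneq (alpha k) 0.
    by have [_ xt_eq] := fail k alpha0; rewrite alpha0 xt_eq in f_next *; lra.
  have [_ xt_eq] := success k alpha_neq0; rewrite xt_eq in f_next.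
  have := PCS_suff_dec (search k) alpha_neq0; rewrite /pcs_suff_dec; lra.
have alpha_cvg0 :=
  lbounded_sqr_decrease_cvg0 gamma_gt0 (fun k => f_ge_m _ (Xx k)) alpha_ge0 f_dec.
apply: cvg0_max => //.
apply: (contract_or_reset_cvg0 (theta := theta) _ alpha_cvg0 atil_ge0) => [|k].
  by rewrite (ltW theta_gt0).
by have [/fail[-> _]|/success[-> _]] := eqVneq (alpha k) 0; rewrite le_max lexx ?orbT.
Qed.
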